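(* Let $A,B$ be Pareto sets of size $n$ each, sorted lexicographically, and let $k$ be the size of their Pareto sum. The (heap-based) Sort \& Compare algorithm computes the Pareto sum of $A$ and $B$ in $\mathcal{O}(n^2\log n)$ time using $\mathcal{O}(n+k)$ space.
   Context: For $p,p'\in\mathbb{R}^2$, $p$ dominates $p'$ if $p\neq p'$, $p.x\le p'.x$ and $p.y\le p'.y$. A Pareto set is a set $S\subset\mathbb{R}^2$ in which no point dominates another; $S_i$ denotes the element of rank $i$ in lexicographic order. The Minkowski matrix is $M_{ij}=A_i+B_j$; each column is a lexicographically sorted Pareto set. The Pareto sum $C$ is the set of entries of $M$ not dominated by any entry of $M$. The Sort \& Compare algorithm: initialize a min-heap (lexicographic order) with the first row $M_{11},\dots,M_{1n}$, each element remembering its matrix position. Repeatedly extract the minimum $M_{ij}$; if $C$ is empty or $M_{ij}$ is neither dominated by nor equal to the last element added to $C$, append $M_{ij}$ to $C$; then, if $i<n$, insert $M_{i+1,j}$ into the heap. Stop when the heap is empty. *)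

From mathcomp Require Import all_boot all_order all_algebra.
Set Implicit Arguments. Unset Strict Implicit. Unset Printing Implicit Defensive.
Import Order.TTheory GRing.Theory Num.Theory.
Local Open Scope ring_scope.

Section Pareto.
Variable R : realDomainType.
Definition pt := (R * R)%type.

Definition dominates (p q : pt) : bool :=
  [&& p != q, p.1 <= q.1 & p.2 <= q.2].

Definition lexle (p q : pt) : bool := (p.1 < q.1) || ((p.1 == q.1) && (p.2 <= q.2)).
Definition lexlt (p q : pt) : bool := (p.1 < q.1) || ((p.1 == q.1) && (p.2 < q.2)).

Definition sorted_pareto (S : seq pt) : bool :=
  sorted lexlt S && all (fun p => all (fun q => ~~ dominates p q) S) S.

Definition padd (p q : pt) : pt := (p.1 + q.1, p.2 + q.2).

(* Minkowski matrix M_ij = A_i + B_j (0-indexed) *)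
Definition mink (A B : seq pt) (i j : nat) : pt := padd (nth 0 A i) (nth 0 B j).

Definition mink_entries (A B : seq pt) : seq pt := [seq padd a b | a <- A, b <- B].

Definition in_pareto_sum (A B : seq pt) (p : pt) : bool :=
  (p \in mink_entries A B) && all (fun q => ~~ dominates q p) (mink_entries A B).

Definition pareto_sum_size (A B : seq pt) : nat :=
  size (undup [seq p <- mink_entries A B | in_pareto_sum A B p]).

(* heap entries: a point with its matrix position (i, j) *)
Definition hentry := (pt * (nat * nat))%type.

(* cost of one heap operation (insert / extract-min) on a binary heap of
   size h : floor(log2 h) + 1 *)
Definition hcost (h : nat) : nat := (trunc_log 2 h).+1.

(* state: heap contents, output C, elapsed time, peak space *)
Definition state := (seq hentry * seq pt * nat * nat)%type.

Definition sc_init (A B : seq pt) (n : nat) : state :=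
  let h := [seq (mink A B 0 j, (0%N, j)) | j <- iota 0 n] in
  (h, [::], (\sum_(j < n) hcost j)%N, size h).

Definition sc_step (A B : seq pt) (n : nat) (st : state) : state :=
  let: (h, C, t, s) := st in
  match h with
  | [::] => st
  | x :: _ =>
    (* extract-min (lexicographic on the point; first minimum in the list) *)
    let i0 := find (fun e : hentry => all (fun e' : hentry => lexle e.1 e'.1) h) h in
    let e := nth x h i0 in
    let h1 := take i0 h ++ drop i0.+1 h in
    let t1 := (t + hcost (size h))%N.+1 in
    let C1 := if (C == [::]) || ~~ (dominates (last 0 C) e.1 || (last 0 C == e.1))
              then rcons C e.1 else C in
    let: (i, j) := e.2 in
    let: (h2, t2) := if (i.+1 < n)%N then
                       (rcons h1 (mink A B i.+1 j, (i.+1, j)), (t1 + hcost (size h1))%N)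
                     else (h1, t1) in
    (h2, C1, t2, maxn s (size h2 + size C1)%N)
  end.

(* run the loop for n*n iterations (each iteration extracts one entry of M) *)
Definition sort_compare (A B : seq pt) (n : nat) : state :=
  iter (n * n)%N (sc_step A B n) (sc_init A B n).

End Pareto.

From mathcomp Require Import all_boot all_order all_algebra zify.
Import Order.TTheory GRing.Theory Num.Theory.
Local Open Scope ring_scope.
Set Implicit Arguments. Unset Strict Implicit.

(* The heap holds, for every column of M that is not exhausted, its topmost
   entry not yet extracted.  Columns are lexicographically sorted because A
   is, so every extraction yields the lexicographic minimum of the entries not
   yet extracted, and the n^2 entries of M come out in lexicographic order.
   In that order a point is dominated by (or equal to) an earlier one iff it
   is so by the last point kept, which is exactly the compare step; hence C is
   the Pareto sum.  Each iteration extracts one entry with O(log n) heap work,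
   the heap never holds more than n entries, and C only ever grows. *)

Section Lexicographic.
Variable R : realDomainType.
Implicit Types p q e : pt R.

Lemma lexle_refl : reflexive (@lexle R).
Proof. by move=> p; rewrite /lexle eqxx lexx orbT. Qed.

Lemma lexle_trans : transitive (@lexle R).
Proof.
move=> q p r; rewrite /lexle.
case/orP=> [lt1|/andP[/eqP e1 le2]]; case/orP=> [lt2|/andP[/eqP e2 le3]].
- by rewrite (lt_trans lt1 lt2).
- by rewrite -e2 lt1.
- by rewrite e1 lt2.
- by rewrite e1 e2 eqxx (le_trans le2 le3) orbT.
Qed.

Lemma lexle_total p q : lexle p q || lexle q p.
Proof. by rewrite /lexle; case: (ltgtP p.1 q.1) => //= _; exact: le_total. Qed.

Lemma lexlt_lexle : subrel (@lexlt R) (@lexle R).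
Proof. by rewrite /lexle => p q /orP[->//|/andP[-> /ltW ->]]; rewrite orbT. Qed.

Lemma lexleD2r p q b : lexle (padd p b) (padd q b) = lexle p q.
Proof. by rewrite /lexle /padd /= ltrD2r lerD2r (inj_eq (addIr b.1)). Qed.

Lemma lexle_fst p q : lexle p q -> p.1 <= q.1.
Proof. by case/orP=> [/ltW|/andP[/eqP-> _]]. Qed.

Lemma dominates_refl p : ~~ dominates p p.
Proof. by rewrite /dominates eqxx. Qed.

Lemma lexle_nodom q e : lexle q e -> ~~ dominates e q.
Proof.
rewrite /dominates; case/orP=> [lt1|/andP[/eqP e1 le2]].
  by rewrite (leNgt e.1) lt1 andbF.
apply/and3P=> [[ne _ le]]; case/eqP: ne.
case: q e e1 le2 le => [q1 q2] [e1 e2] /= -> le1 le2.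
by congr pair; apply/le_anti; rewrite le1 le2.
Qed.

Lemma lexle_wdomE q e : lexle q e -> (dominates q e || (q == e)) = (q.2 <= e.2).
Proof.
move=> /lexle_fst le1; rewrite /dominates le1 /=.
case: eqP => [->|_]; by rewrite ?lexx ?orbT ?orbF.
Qed.

End Lexicographic.

Section CompareFilter.
Variable R : realDomainType.
Implicit Types (p q e : pt R) (P C : seq (pt R)).

Definition minimal_in P p := (p \in P) && all (fun q => ~~ dominates q p) P.

Definition compare_step C e :=
  if (C == [::]) || ~~ (dominates (last 0 C) e || (last 0 C == e)) then rcons C e else C.

Record front P C : Prop := Front {
  front_uniq : uniq C;
  front_mem : forall p, (p \in C) = minimal_in P p;
  front_nil : (C == [::]) = (P == [::]);
  front_last : {in P, forall q, (last 0 C).2 <= q.2} }.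

Lemma front0 : front [::] [::].
Proof. by []. Qed.

Lemma size_compare_step C e : (size C <= size (compare_step C e))%N.
Proof. by rewrite /compare_step; case: ifP; rewrite ?size_rcons. Qed.

Lemma minimal_in_rcons P e p : {in P, forall q, lexle q e} -> p != e ->
  minimal_in (rcons P e) p = minimal_in P p.
Proof.
move=> le_e ne; rewrite /minimal_in mem_rcons in_cons (negbTE ne) all_rcons /=.
by case pP: (p \in P); rewrite //= lexle_nodom ?le_e.
Qed.

Lemma minimal_in_rcons_last P e :
  minimal_in (rcons P e) e = all (fun q => ~~ dominates q e) P.
Proof. by rewrite /minimal_in mem_rcons mem_head all_rcons dominates_refl. Qed.

(* Points arrive in lexicographic order, so the last point kept has the least
   y-coordinate so far and decides alone whether a new point is dominated. *)
Lemma front_rcons P C e : front P C -> {in P, forall q, lexle q e} ->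
  front (rcons P e) (compare_step C e).
Proof.
move=> [uC memC nilC lastC] le_e.
have memC' p : p != e -> (p \in compare_step C e) = (p \in C).
  by move=> ne; rewrite /compare_step; case: ifP; rewrite // mem_rcons in_cons (negbTE ne).
have mem_ne p : p != e -> (p \in compare_step C e) = minimal_in (rcons P e) p.
  by move=> ne; rewrite memC' // memC minimal_in_rcons.
have [C0|C_ne0] := eqVneq C [::].
  have P0 : P = [::] by apply/eqP; rewrite -nilC C0.
  rewrite /compare_step C0 P0; split=> //= [p|q].
    rewrite /minimal_in /= andbT; case: (p =P e) => [->|/eqP ne].
      by rewrite dominates_refl andbT.
    by rewrite inE (negbTE ne).
  by rewrite inE => /eqP->.
have cC : last 0 C \in C.
  by case: C C_ne0 {uC memC nilC lastC memC' mem_ne} => //= ? ? _; exact: mem_last.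
set c := last 0 C in cC lastC *.
have /andP[cP ndc] : minimal_in P c by rewrite -memC.
have cstepE : compare_step C e = if e.2 < c.2 then rcons C e else C.
  by rewrite /compare_step (negbTE C_ne0) /= -/c (lexle_wdomE (le_e c cP)) ltNge.
rewrite cstepE; case: ltP => [lt_ec|le_ce].
  have eC : e \notin C by rewrite memC; apply/negP=> /andP[/lastC]; rewrite leNgt lt_ec.
  split.
  - by rewrite rcons_uniq eC uC.
  - move=> p; have [->|ne] := eqVneq p e; last by rewrite -mem_ne // cstepE lt_ec.
    rewrite mem_rcons mem_head minimal_in_rcons_last; apply/esym/allP=> q qP.
    by apply/negP=> /and3P[_ _]; rewrite leNgt (lt_le_trans lt_ec (lastC q qP)).
  - by rewrite -!size_eq0 !size_rcons.
  - rewrite last_rcons => q; rewrite mem_rcons in_cons => /predU1P[->//|/lastC].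
    exact/le_trans/ltW.
split=> //.
- move=> p; have [->|ne] := eqVneq p e; last by rewrite -mem_ne // cstepE ltNge le_ce.
  rewrite minimal_in_rcons_last; move: le_ce; rewrite -(lexle_wdomE (le_e c cP)).
  case/orP=> [dce|/eqP <-]; last by rewrite cC.
  have /negbTE nall : ~~ all (fun q => ~~ dominates q e) P.
    by apply/allPn; exists c; rewrite ?dce.
  by rewrite memC /minimal_in nall andbF.
- by move: C_ne0; rewrite -!size_eq0 size_rcons => /negbTE.
- move=> q; rewrite mem_rcons in_cons => /predU1P[->//|]; exact: lastC.
Qed.

End CompareFilter.

Section SortCompare.
Variables (R : realDomainType) (A B : seq (pt R)) (n : nat).
Hypotheses (sortA : sorted (@lexle R) A) (szA : size A = n) (szB : size B = n).
Implicit Types (e : hentry R) (h : seq (hentry R)) (P C : seq (pt R)).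
Local Open Scope nat_scope.

Definition entry (ij : nat * nat) : hentry R := (mink A B ij.1 ij.2, ij).

Definition next_entries e : seq (hentry R) :=
  if e.2.1.+1 < n then [:: entry (e.2.1.+1, e.2.2)] else [::].

(* While (i, j) is on the heap, the n - i entries of column j from row i on
   are still to be extracted. *)
Definition pending h := sumn [seq n - e.2.1 | e <- h].

Lemma leq_hcost m k : m <= k -> hcost m <= hcost k.
Proof. by move=> le_mk; rewrite /hcost ltnS leq_trunc_log. Qed.

Lemma has_lexmin x h : has (fun e => all (fun e' => lexle e.1 e'.1) (x :: h)) (x :: h).
Proof.
pose le := fun e e' : hentry R => lexle e.1 e'.1.
have le_total : total le by move=> ? ?; exact: lexle_total.
have le_trans : transitive le by move=> ? ? ?; exact: lexle_trans.
have := sort_sorted le_total (x :: h).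
case Es: (sort le (x :: h)) => [|m s]; first by move/(congr1 size): Es; rewrite size_sort.
move=> /(order_path_min le_trans) min_m; apply/hasP; exists m.
  by rewrite -(mem_sort le) Es mem_head.
apply/allP=> y; rewrite -(mem_sort le) Es inE => /predU1P[->|/(allP min_m)//].
exact: lexle_refl.
Qed.

Lemma sc_step_cons x h C t s : exists e h1 t',
  [/\ perm_eq (x :: h) (e :: h1), {in x :: h, forall y, lexle e.1 y.1},
      t' <= t + (hcost (size h).+1).*2.+1 &
      sc_step A B n (x :: h, C, t, s) =
        let h2 := h1 ++ next_entries e in let C1 := compare_step C e.1 in
        (h2, C1, t', maxn s (size h2 + size C1))].
Proof.
rewrite /sc_step -/(compare_step C _).
set hh := x :: h; set i0 := find _ hh; set e := nth x hh i0.
set h1 := take i0 hh ++ drop i0.+1 hh.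
have has_min := has_lexmin x h.
have i0_lt : i0 < size hh by rewrite -has_find.
have perm_h : perm_eq hh (e :: h1).
  by rewrite -{1}(cat_take_drop i0 hh) (drop_nth x i0_lt) -cat1s perm_catCA.
have size_h1 : size h1 = size h by have := perm_size perm_h; rewrite /= => -[].
have c1 : hcost (size h1) <= hcost (size h).+1 by rewrite size_h1 leq_hcost.
have min_e : {in hh, forall y, lexle e.1 y.1} by apply/allP; exact: (nth_find x has_min).
exists e, h1; rewrite /next_entries.
case: e perm_h min_e => p [i j] perm_h min_e /=.
by case: ifP => _; (eexists; split; [| | |by rewrite ?cats1 ?cats0]); rewrite //; lia.
Qed.

Lemma mink_mem i j : i < n -> j < n -> mink A B i j \in mink_entries A B.
Proof. by rewrite -{1}szA -szB => iA jB; apply: allpairs_f; exact: mem_nth. Qed.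

Lemma lexle_mink_succ i j : i.+1 < n -> lexle (mink A B i j) (mink A B i.+1 j).
Proof.
rewrite -szA => lt_in; rewrite /mink lexleD2r.
by apply: (sorted_leq_nth (@lexle_trans R) (@lexle_refl R) 0%R sortA); rewrite ?inE // ltnW.
Qed.

Lemma mem_next_entries e y : y \in next_entries e ->
  e.2.1.+1 < n /\ y = entry (e.2.1.+1, e.2.2).
Proof. by rewrite /next_entries; case: ifP => // lt; rewrite inE => /eqP. Qed.

Record heap_inv P h : Prop := HeapInv {
  heap_entries : {in h, forall e, [/\ e.2.1 < n, e.2.2 < n & e = entry e.2]};
  heap_size : size h <= n;
  heap_above : {in P, forall q, {in h, forall e, lexle q e.1}};
  extracted_entries : {subset P <= mink_entries A B};
  heap_cover : forall i j, i < n -> j < n ->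
    mink A B i j \in P \/ exists2 i', i' <= i & entry (i', j) \in h }.

Lemma heap_inv_init : heap_inv [::] [seq entry (0, j) | j <- iota 0 n].
Proof.
split=> //.
- move=> e /mapP[j]; rewrite mem_iota add0n => /andP[_ lt_jn] ->.
  by split=> //; apply: leq_ltn_trans lt_jn.
- by rewrite (size_map (fun j => entry (0, j))) size_iota.
- move=> i j _ lt_jn; right; exists 0 => //.
  by apply: map_f; rewrite mem_iota.
Qed.

Lemma heap_inv_step P h e h1 :
  heap_inv P h -> perm_eq h (e :: h1) -> {in h, forall y, lexle e.1 y.1} ->
  heap_inv (rcons P e.1) (h1 ++ next_entries e).
Proof.
move=> [entries size_h above extracted cover] perm_h min_e.
have mem_h y : (y \in h) = (y == e) || (y \in h1) by rewrite (perm_mem perm_h) inE.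
have h1_h y : y \in h1 -> y \in h by rewrite mem_h orbC => ->.
have e_h : e \in h by rewrite mem_h eqxx.
have [lt_in lt_jn eE] := entries e e_h.
have min_e' : {in h1 ++ next_entries e, forall y, lexle e.1 y.1}.
  move=> y; rewrite mem_cat => /orP[/h1_h/min_e//|/mem_next_entries[lt ->]].
  by rewrite eE; apply: lexle_mink_succ.
split.
- move=> y; rewrite mem_cat => /orP[/h1_h/entries//|/mem_next_entries[lt ->]].
  by split.
- have size_next : (size (next_entries e) <= 1) by rewrite /next_entries; case: ifP.
  by rewrite size_cat (leq_trans _ size_h) // (perm_size perm_h) /= -addn1 leq_add2l.
- move=> q; rewrite mem_rcons inE => /predU1P[->|/above/(_ e e_h) le_qe] y /min_e' //.
  exact: lexle_trans.
- by move=> q; rewrite mem_rcons inE => /predU1P[->|/extracted//]; rewrite eE mink_mem.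
move=> i j lt_i lt_j; case: (cover i j lt_i lt_j) => [P_ij|[i' le_i' h_ij]].
  by left; rewrite mem_rcons inE P_ij orbT.
move: h_ij; rewrite mem_h => /predU1P[E|h1_ij]; last first.
  by right; exists i'; rewrite ?mem_cat ?h1_ij.
move: le_i'; rewrite leq_eqVlt => /predU1P[<-|lt_i'i].
  by left; rewrite mem_rcons -E mem_head.
right; exists i'.+1 => //; rewrite mem_cat /next_entries -E /=.
by rewrite (leq_ltn_trans lt_i'i lt_i) inE eqxx orbT.
Qed.

Lemma pending_step h e h1 : perm_eq h (e :: h1) -> e.2.1 < n ->
  pending h = (pending (h1 ++ next_entries e)).+1.
Proof.
move=> perm_h lt_in; have -> : pending h = pending (e :: h1) by exact/perm_sumn/perm_map.
by rewrite /pending map_cat sumn_cat /next_entries /=; case: ifP => /= lt; lia.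
Qed.

Lemma pending_eq0 h : {in h, forall e, e.2.1 < n} -> pending h = 0 -> h = [::].
Proof.
case: h => // e h /(_ e (mem_head _ _)) lt.
by rewrite /pending /= => /eqP; rewrite addn_eq0 subn_eq0 leqNgt lt.
Qed.

Record sc_inv k P h C t s : Prop := SCInv {
  inv_heap : heap_inv P h;
  inv_front : front P C;
  inv_pending : pending h + k = n * n;
  inv_time : t <= n * hcost n + k * (hcost n).*2.+1;
  inv_space : s <= n + size C }.

Definition sc_invariant k (st : state R) :=
  let: (h, C, t, s) := st in exists P, sc_inv k P h C t s.

Lemma sc_invariant_init : sc_invariant 0 (sc_init A B n).
Proof.
exists [::]; split; [exact: heap_inv_init | exact: front0 | | |].
- rewrite addn0 /pending -map_comp -[X in (_ = X * _)](size_iota 0 n).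
  by elim: (iota 0 n) => //= j s ->; rewrite subn0 mulSn.
- rewrite mul0n addn0 -[X in (_ <= X * _)](card_ord n) -sum_nat_const.
  by apply: leq_sum => j _; apply/leq_hcost/ltnW.
- by rewrite (size_map (fun j => entry (0, j))) size_iota addn0.
Qed.

Lemma sc_invariant_step k st : k < n * n ->
  sc_invariant k st -> sc_invariant k.+1 (sc_step A B n st).
Proof.
case: st => [[[[|x h] C] t] s] lt_k [P [hinv fr pend time space]].
  by move: lt_k; rewrite -pend add0n ltnn.
have [e [h1 [t' [perm_h min_e le_t' ->]]]] := sc_step_cons x h C t s.
have e_h : e \in x :: h by rewrite (perm_mem perm_h) mem_head.
have [lt_in _ _] := heap_entries hinv e_h.
have hinv' := heap_inv_step hinv perm_h min_e.
exists (rcons P e.1); split => //.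
- by apply: front_rcons fr _ => q qP; exact: heap_above hinv _ qP _ e_h.
- by rewrite -pend (pending_step perm_h lt_in) addSnnS.
- have /= := leq_hcost (heap_size hinv); rewrite mulSn; lia.
- rewrite ssrnat.geq_max leq_add ?(heap_size hinv') // andbT.
  by rewrite (leq_trans space) // leq_add2l size_compare_step.
Qed.

Lemma sc_invariant_iter k : k <= n * n ->
  sc_invariant k (iter k (sc_step A B n) (sc_init A B n)).
Proof.
elim: k => [|k IH] lt_k; first exact: sc_invariant_init.
by apply: sc_invariant_step lt_k (IH (ltnW lt_k)).
Qed.

Lemma sort_compare_spec :
  let: (h, C, t, s) := sort_compare A B n in
  [/\ h = [::], uniq C, forall p, (p \in C) = in_pareto_sum A B p,
      t <= n * hcost n + n * n * (hcost n).*2.+1 & s <= n + size C].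
Proof.
have := sc_invariant_iter (leqnn (n * n)); rewrite /sort_compare /sc_invariant.
case: (iter _ _ _) => [[[h C] t] s] [P [hinv [uniqC memC _ _] pend time space]].
have h0 : h = [::].
  apply: pending_eq0 => [e /(heap_entries hinv)[]//|].
  by apply/eqP; rewrite -(eqn_add2r (n * n)) pend.
have memP : P =i mink_entries A B.
  move=> p; apply/idP/idP => [/(extracted_entries hinv)//|].
  case/allpairsP=> [[a b] /= [aA bB ->]].
  have lt_a : index a A < n by rewrite -szA index_mem.
  have lt_b : index b B < n by rewrite -szB index_mem.
  case: (heap_cover hinv lt_a lt_b) => [|[i' _]]; last by rewrite h0.
  by rewrite /mink !nth_index.
split=> // p; rewrite memC /minimal_in /in_pareto_sum memP; congr (_ && _).
exact: eq_all_r.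
Qed.

End SortCompare.

Lemma pareto_sum_sizeE (R : realDomainType) (A B : seq (pt R)) (C : seq (pt R)) :
  uniq C -> (forall p, (p \in C) = in_pareto_sum A B p) -> pareto_sum_size A B = size C.
Proof.
move=> uniqC memC; apply/esym/perm_size/uniq_perm; rewrite ?undup_uniq // => p.
rewrite mem_undup mem_filter memC /in_pareto_sum.
by case: (p \in mink_entries A B); rewrite ?andbT.
Qed.

Theorem mainTheorem5 :
  exists c : nat,
  forall (R : realDomainType) (n : nat) (A B : seq (pt R)),
    size A = n -> size B = n ->
    sorted_pareto A -> sorted_pareto B ->
    let: (heap, C, time, space) := sort_compare A B n in
    [/\ heap = [::],
        uniq C,
        (forall p : pt R, (p \in C) = in_pareto_sum A B p),
        (2 <= n)%N -> (time <= c * (n ^ 2 * trunc_log 2 n))%N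
      & (space <= c * (n + pareto_sum_size A B))%N].
Proof.
exists 7%N => R n A B szA szB /andP[sortA _] _.
have := sort_compare_spec (sub_sorted (@lexlt_lexle R) sortA) szA szB.
case: (sort_compare _ _ _) => [[[h C] t] s] [-> uniqC memC time space].
split=> // [n_ge2|]; last by rewrite (pareto_sum_sizeE uniqC memC); lia.
have : (0 < trunc_log 2 n)%N by rewrite trunc_log_gt0.
by move: time; rewrite /hcost -mulnn -!mul2n; nia.
Qed.
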